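(* Let $G=(V,E)$ be a finite, simple, connected graph with $|V|\geq 3$, let $\Gamma_3(G)=\{\mathcal{T}_1,\dots,\mathcal{T}_m\}$, and let $d\in\mathrm{Der}(\mathcal{A}(G))$ with $d(e_i)=\sum_{k\in V}d_{ik}e_k$. Then: (a) $d_{ii}=0$ for every $i\in V$; (b) for $i\neq j$, $d_{ij}=0$ unless $i$ and $j$ belong to the same class $\mathcal{T}_\ell\in\Gamma_3(G)$; (c) for $i\neq j$ in the same $\mathcal{T}_\ell$, $d_{ij}=-d_{ji}$; (d) for each $\ell\in\{1,\dots,m\}$ and each $i\in\mathcal{T}_\ell$, $\sum_{k\in\mathcal{T}_\ell}d_{ki}=0$. Equivalently, after a permutation of the basis listing the vertices of $\mathcal{T}_1$, then $\mathcal{T}_2$, ..., then $\mathcal{T}_m$, then the remaining vertices, the matrix $(d_{ij})$ is block diagonal with diagonal blocks $A_1(d),\dots,A_m(d),\mathbf{0}$, where each $A_\ell(d)$ is a $|\mathcal{T}_\ell|\times|\mathcal{T}_\ell|$ skew-symmetric matrix with zero diagonal (of the form $U-U^T$ with $U$ strictly upper triangular) satisfying the column-sum condition (d), and all other entries are zero. If $\Gamma_3(G)=\emptyset$ this reduces to $d=0$.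
   Context: Throughout, $\mathbb{K}$ is a field of characteristic $0$. A graph $G=(V,E)$ has vertex set $V=\{1,\dots,n\}$ and is assumed finite, simple (no loops, no multiple edges) and connected. $\mathcal{N}(i)$ denotes the set of neighbors of vertex $i$, $\deg(i)=|\mathcal{N}(i)|$, and $(a_{ij})$ is the adjacency matrix ($a_{ij}=1$ if $i,j$ are adjacent, $0$ otherwise). The evolution algebra $\mathcal{A}(G)$ is the $\mathbb{K}$-algebra with basis $\{e_i: i\in V\}$ and product $e_i\cdot e_i=\sum_{k\in V}a_{ik}e_k=\sum_{k\in\mathcal{N}(i)}e_k$ and $e_i\cdot e_j=0$ for $i\neq j$. A derivation of $\mathcal{A}(G)$ is a linear map $d:\mathcal{A}(G)\to\mathcal{A}(G)$ with $d(u\cdot v)=d(u)\cdot v+u\cdot d(v)$ for all $u,v$; $\mathrm{Der}(\mathcal{A}(G))$ is the space of derivations, and for $d$ in it we write $d(e_i)=\sum_{k\in V}d_{ik}e_k$. Two vertices $i,j$ are twins, written $i\sim_t j$, if $\mathcal{N}(i)=\mathcal{N}(j)$; this is an equivalence relation whose classes are called twin classes. $\Gamma_3(G)$ denotes the set of twin classes of $G$ having at least three vertices. *)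

From HB Require Import structures.
From mathcomp Require Import all_boot all_order all_algebra.
Set Implicit Arguments. Unset Strict Implicit. Unset Printing Implicit Defensive.
Import Order.TTheory GRing.Theory Num.Theory.
Local Open Scope ring_scope.

Definition simple_graph (n : nat) (adj : rel 'I_n) : Prop :=
  symmetric adj /\ irreflexive adj.

Definition connected_graph (n : nat) (adj : rel 'I_n) : Prop :=
  forall i j : 'I_n, connect adj i j.

(* Elements of the evolution algebra A(G) are coordinate row vectors in the
   basis (e_i).  Product: e_i e_i = sum_{k in N(i)} e_k, e_i e_j = 0 (i<>j),
   extended bilinearly: (u.v)_k = sum_i u_i v_i a_{ik}. *)
Definition evo_mul (K : fieldType) (n : nat) (adj : rel 'I_n)
    (u v : 'rV[K]_n) : 'rV[K]_n :=
  \row_(k < n) \sum_(i < n) u 0 i * v 0 i * (adj i k)%:R.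

(* The linear map d with d(e_i) = sum_k D i k e_k acts on coordinate rows as
   u |-> u *m D. D is a derivation iff the Leibniz rule holds. *)
Definition is_derivation (K : fieldType) (n : nat) (adj : rel 'I_n)
    (D : 'M[K]_n) : Prop :=
  forall u v : 'rV[K]_n,
    evo_mul adj u v *m D = evo_mul adj (u *m D) v + evo_mul adj u (v *m D).

Definition twins (n : nat) (adj : rel 'I_n) (i j : 'I_n) : bool :=
  [forall k, adj i k == adj j k].

Definition twin_class (n : nat) (adj : rel 'I_n) (i : 'I_n) : {set 'I_n} :=
  [set j | twins adj i j].

Definition in_Gamma3 (n : nat) (adj : rel 'I_n) (i : 'I_n) : bool :=
  (3 <= #|twin_class adj i|)%N.

From HB Require Import structures.
From mathcomp Require Import all_boot all_order all_algebra.
Import GRing.Theory.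
Local Open Scope ring_scope.

(* Applying the Leibniz rule to [e_i * e_j] gives, for every vertex t,
     [i == j] * (sum_{k in N(j)} d_kt) = d_ij a_jt + d_ji a_it.
   For i <> j with distinct neighbourhoods this kills d_ij (every vertex has
   a neighbour by connectivity); for twins it gives d_ij = -d_ji.  For i = j
   the column sum of d over the twin class of any neighbour t of w equals
   2 d_ww.  Summing these column sums over the class of t, the skew part
   cancels and the constant diagonal of the class gives d_tt = 2 d_ww for all
   adjacent w, t; applying this in both directions yields d_ww = 4 d_ww, so
   the diagonal vanishes and all twin-class column sums are 0.  A class
   {i, j} of size two then forces d_ij = -d_jj = 0. *)

Set Implicit Arguments.
Unset Strict Implicit.
Unset Printing Implicit Defensive.

Lemma mulrnI_pchar0 (K : fieldType) (m : nat) :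
  [pchar K] =i pred0 -> (0 < m)%N -> injective (fun x : K => x *+ m).
Proof.
move=> hK m_gt0 x y /= /eqP; rewrite -subr_eq0 -mulrnBl -mulr_natr mulf_eq0.
by rewrite ((pcharf0P K).1 hK) eqn0Ngt m_gt0 orbF subr_eq0 => /eqP.
Qed.

Section Twins.

Variables (n : nat) (adj : rel 'I_n).

Lemma twinsP i j : reflect (forall k, adj i k = adj j k) (twins adj i j).
Proof. by apply: (iffP forallP) => h k; [apply/eqP | rewrite h]. Qed.

Lemma twins_refl : reflexive (twins adj).
Proof. by move=> i; apply/twinsP. Qed.

Lemma twins_sym : symmetric (twins adj).
Proof. by move=> i j; apply/twinsP/twinsP => h k; rewrite h. Qed.

Lemma twins_trans : transitive (twins adj).
Proof. by move=> j i k /twinsP hij /twinsP hjk; apply/twinsP => t; rewrite hij. Qed.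

Lemma mem_twin_class i j : (j \in twin_class adj i) = twins adj i j.
Proof. by rewrite inE. Qed.

Lemma twin_class_refl i : i \in twin_class adj i.
Proof. by rewrite mem_twin_class twins_refl. Qed.

Lemma twin_class_eq i j : twins adj i j -> twin_class adj i = twin_class adj j.
Proof.
move=> hij; apply/setP => k; rewrite !mem_twin_class.
by apply/idP/idP; apply: twins_trans; rewrite // twins_sym.
Qed.

Lemma adj_twin_class (w t k : 'I_n) : symmetric adj ->
  adj w t -> k \in twin_class adj t -> adj w k.
Proof.
by move=> hsym hwt; rewrite mem_twin_class => /twinsP htk; rewrite hsym -htk hsym.
Qed.

Lemma connected_has_neighbour i :
  connected_graph adj -> (1 < n)%N -> exists s, adj i s.
Proof.
move=> hconn n_gt1.
have [j ji] : exists j : 'I_n, j != i.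
  have /card_gt1P[a [b [_ _ ab]]] : (1 < #|'I_n|)%N by rewrite card_ord.
  by case: (eqVneq a i) => [<- | ai]; [exists b; rewrite eq_sym | exists a].
have /connectP[[|s p] /= hp def_j] := hconn i j; first by rewrite def_j eqxx in ji.
by case/andP: hp => his _; exists s.
Qed.

End Twins.

Lemma evo_mul_deltar (K : fieldType) n (adj : rel 'I_n) (u : 'rV[K]_n) j t :
  evo_mul adj u (delta_mx 0 j) 0 t = u 0 j * (adj j t)%:R.
Proof.
rewrite mxE (bigD1 j) //= big1 ?addr0; first by rewrite mxE !eqxx mulr1.
by move=> k /negbTE hk; rewrite mxE hk andbF mulr0 mul0r.
Qed.

Lemma evo_mul_deltal (K : fieldType) n (adj : rel 'I_n) (v : 'rV[K]_n) i t :
  evo_mul adj (delta_mx 0 i) v 0 t = v 0 i * (adj i t)%:R.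
Proof.
rewrite mxE (bigD1 i) //= big1 ?addr0; first by rewrite mxE !eqxx mul1r.
by move=> k /negbTE hk; rewrite mxE hk andbF !mul0r.
Qed.

Lemma skew_double_sum (K : fieldType) (T : finType) (A : {set T}) (M : T -> T -> K) :
  [pchar K] =i pred0 ->
  {in A &, forall a b, a != b -> M a b = - M b a} ->
  \sum_(a in A) \sum_(b in A) M b a = \sum_(a in A) M a a.
Proof.
move=> hK skew; apply: (mulrnI_pchar0 (m := 2)) => //=.
rewrite !mulr2n {1}exchange_big -!big_split /=; apply: eq_bigr => a aA.
rewrite -big_split /= (bigD1 a) //= big1 ?addr0 // => b /andP[bA ba].
by rewrite (skew b a) ?addrN.
Qed.

Section Derivation.

Variables (K : fieldType) (n : nat) (adj : rel 'I_n) (D : 'M[K]_n).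
Hypotheses (hK : [pchar K] =i pred0) (hsym : symmetric adj).
Hypothesis has_neighbour : forall i, exists s, adj i s.
Hypothesis hD : is_derivation adj D.

Lemma derivation_basis i j t :
  (i == j)%:R * \sum_k (adj j k)%:R * D k t
  = D i j * (adj j t)%:R + D j i * (adj i t)%:R.
Proof.
have := congr1 (fun M : 'rV[K]_n => M 0 t) (hD (delta_mx 0 i) (delta_mx 0 j)).
rewrite /= [in RHS]mxE evo_mul_deltar evo_mul_deltal -!rowE !mxE => <-.
rewrite big_distrr /=; apply: eq_bigr => k _.
by rewrite evo_mul_deltar mxE eqxx /= mulrA eq_sym.
Qed.

Lemma derivation_offdiag i j t : i != j ->
  D i j * (adj j t)%:R + D j i * (adj i t)%:R = 0.
Proof. by move=> ij; rewrite -derivation_basis (negbTE ij) mul0r. Qed.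

Lemma derivation_non_twins i j : i != j -> ~~ twins adj i j -> D i j = 0.
Proof.
move=> ij /twinsP ntw.
have [t] : exists t, adj i t != adj j t.
  by apply/existsP; apply: contra_notN ntw => /forallP h k; apply/eqP.
have ji : j != i by rewrite eq_sym.
case hit: (adj i t); case hjt: (adj j t) => // _.
  have := derivation_offdiag t ji; rewrite hit hjt mulr1 mulr0 addr0 => Dji0.
  have [s hjs] := has_neighbour j.
  by have := derivation_offdiag s ij; rewrite hjs Dji0 mul0r addr0 mulr1.
by have := derivation_offdiag t ij; rewrite hit hjt mulr1 mulr0 addr0.
Qed.

Lemma derivation_twins_skew i j : i != j -> twins adj i j -> D i j = - D j i.
Proof.
move=> ij /twinsP tw; have [s his] := has_neighbour i.
have := derivation_offdiag s ij; rewrite -tw his !mulr1 => /eqP.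
by rewrite addr_eq0 => /eqP.
Qed.

Lemma derivation_twin_class_sum w t : adj w t ->
  \sum_(k in twin_class adj t) D k t = D w w *+ 2.
Proof.
move=> hwt; have := derivation_basis w w t; rewrite eqxx mul1r hwt mulr1 -mulr2n.
move=> <-; rewrite big_mkcond /=; apply: eq_bigr => k _.
have [tk | ntk] := boolP (k \in twin_class adj t).
  by rewrite (adj_twin_class hsym hwt tk) mul1r.
have kt : k != t by apply: contraNneq ntk => ->; apply: twin_class_refl.
by rewrite derivation_non_twins ?mulr0 // twins_sym -mem_twin_class.
Qed.

Lemma derivation_diag_twin_class t a : a \in twin_class adj t -> D a a = D t t.
Proof.
move=> ta; have [w htw] := has_neighbour t.
have haw : adj a w by rewrite hsym (adj_twin_class hsym _ ta) // hsym.
apply: (mulrnI_pchar0 (m := 2)) => //=.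
by rewrite -(derivation_twin_class_sum haw) -(derivation_twin_class_sum htw).
Qed.

Lemma derivation_diag_adj w t : adj w t -> D t t = D w w *+ 2.
Proof.
move=> hwt; set T := twin_class adj t.
have tT : t \in T by apply: twin_class_refl.
have col_sums : \sum_(a in T) \sum_(b in T) D b a = (D w w *+ 2) *+ #|T|.
  rewrite -sumr_const; apply: eq_bigr => a Ta.
  rewrite -(derivation_twin_class_sum (adj_twin_class hsym hwt Ta)).
  by rewrite /T (twin_class_eq (_ : twins adj t a)) // -mem_twin_class.
have diag : \sum_(a in T) \sum_(b in T) D b a = D t t *+ #|T|.
  rewrite (skew_double_sum hK) -?sumr_const.
    by apply: eq_bigr => a; apply: derivation_diag_twin_class.
  move=> a b; rewrite !mem_twin_class => ta tb ab.
  by apply: derivation_twins_skew; rewrite // (twins_trans _ tb) // twins_sym.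
apply: (mulrnI_pchar0 (m := #|T|)) => //=; first by apply/card_gt0P; exists t.
by rewrite -diag col_sums.
Qed.

Lemma derivation_diag0 i : D i i = 0.
Proof.
have [s his] := has_neighbour i.
have /eqP := derivation_diag_adj (etrans (hsym s i) his).
rewrite (derivation_diag_adj his) -mulrnA eq_sym -subr_eq0.
rewrite -{2}(mulr1n (D i i)) -mulrnBr // => /eqP Dii3.
by apply: (mulrnI_pchar0 (m := 3) hK); rewrite //= mul0rn.
Qed.

Lemma derivation_twin_class_sum0 i : \sum_(k in twin_class adj i) D k i = 0.
Proof.
have [s his] := has_neighbour i.
by rewrite (derivation_twin_class_sum (etrans (hsym s i) his)) derivation_diag0 mul0rn.
Qed.

Lemma derivation_small_twin_class i j : i != j -> twins adj i j ->
  (#|twin_class adj i| <= 2)%N -> D i j = 0.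
Proof.
move=> ij tw small.
have class_ij : twin_class adj i = [set i; j].
  apply/esym/eqP; rewrite eqEcard cards2 ij small andbT.
  by apply/subsetP => k; rewrite !inE => /orP[] /eqP->; rewrite ?twins_refl.
have := derivation_twin_class_sum0 j.
by rewrite -(twin_class_eq tw) class_ij big_setU1 ?inE // big_set1 /= derivation_diag0 addr0.
Qed.

End Derivation.

Theorem theorem2p2 (K : fieldType) (hK : [pchar K] =i pred0)
  (n : nat) (adj : rel 'I_n)
  (hsimple : simple_graph adj) (hconn : connected_graph adj) (hn : (3 <= n)%N)
  (D : 'M[K]_n) (hD : is_derivation adj D) :
  (* (a) *) (forall i : 'I_n, D i i = 0) /\
  (* (b) *) (forall i j : 'I_n, i != j -> D i j != 0 ->
               twins adj i j && in_Gamma3 adj i) /\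
  (* (c) *) (forall i j : 'I_n, i != j -> twins adj i j -> in_Gamma3 adj i ->
               D i j = - D j i) /\
  (* (d) *) (forall i : 'I_n, in_Gamma3 adj i ->
               \sum_(k in twin_class adj i) D k i = 0).
Proof.
have [hsym _] := hsimple.
have nb i : exists s, adj i s by apply: connected_has_neighbour; rewrite // ltnW.
split; [|split; [|split]].
- exact: derivation_diag0 hsym nb hD.
- move=> i j ij Dij.
  have tw : twins adj i j.
    by apply: contraNT Dij => ntw; rewrite (derivation_non_twins nb hD ij ntw).
  rewrite tw /in_Gamma3 ltnNge; apply: contra Dij => small.
  by rewrite (derivation_small_twin_class hK hsym nb hD ij tw small).
- by move=> i j ij tw _; exact: (derivation_twins_skew nb hD ij tw).
- by move=> i _; exact: derivation_twin_class_sum0 hK hsym nb hD i.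
Qed.
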